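(* Let $\Psi=P\cap\mathrm{Cl}^+(3)$, where $P$ is the group generated under the geometric product by $a_2,a_3$ and $e_1e_2e_3$; $\Psi$ is a set of 20 spinors forming a root system of type $H_2\oplus H_2$ inside the 120-element $H_4$ root system $2I$. Let $\mathcal{G}=2I\setminus\Psi$ (100 elements, the vertex set of the Grand Antiprism). Then both $\Psi$ and $\mathcal{G}$ are invariant under the reflection group $H_2\times H_2$ generated by the reflections $s_R(X)=-R\tilde XR$, $R\in\Psi$.
   Context: $\mathrm{Cl}(3)$ is the real Clifford algebra of Euclidean $\mathbb{R}^3$ with orthonormal basis $e_1,e_2,e_3$ ($e_i^2=1$, $e_ie_j=-e_je_i$ for $i\neq j$). The even subalgebra $\mathrm{Cl}^+(3)$ is spanned by $1,e_2e_3,e_3e_1,e_1e_2$ (spinors). Reversal $\tilde{\ }$ reverses the order of vector factors. The spinor inner product $(R_1,R_2)=\tfrac12(R_1\tilde R_2+R_2\tilde R_1)$ makes $\mathrm{Cl}^+(3)$ a 4D Euclidean space with orthonormal basis $1,e_2e_3,e_3e_1,e_1e_2$; for a unit spinor $R$, $s_R(X)=X-2(R,X)R=-R\tilde XR$ is the reflection in the hyperplane orthogonal to $R$. Let $\tau=\frac{1+\sqrt5}{2}$. The $H_3$ simple roots are $a_1=e_2$, $a_2=\tfrac12(-\tau e_1-e_2-(\tau-1)e_3)$, $a_3=e_1$. The binary icosahedral group $2I$ is the set of all products of an even number of factors from $\{a_1,a_2,a_3\}$ (order 120); viewed as 120 vectors in the 4D spinor space it is the $H_4$ root system (600-cell).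 *)

From HB Require Import structures.
From mathcomp Require Import all_boot all_order all_algebra.
Set Implicit Arguments. Unset Strict Implicit. Unset Printing Implicit Defensive.
Import Order.TTheory GRing.Theory Num.Theory.
Local Open Scope ring_scope.

Notation mv R := {ffun {set 'I_3} -> R}.

Section Cl3.
Variable R : rcfType.

(* A multivector of Cl(3) is given by its coordinates on the basis blades
   e_A, A a subset of {1,2,3} = 'I_3 (e_A = product of e_i, i in A, in
   increasing order). *)

(* sign of e_A e_B = sign * e_(A symmetric-difference B), Euclidean metric e_i^2 = 1 *)
Definition blade_sign (A B : {set 'I_3}) : R :=
  (-1) ^+ #|[set p : 'I_3 * 'I_3 | [&& p.1 \in A, p.2 \in B & (p.2 < p.1)%N]]|.

Definition symdiff (A B : {set 'I_3}) : {set 'I_3} := (A :\: B) :|: (B :\: A).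

Definition gp (x y : mv R) : mv R :=
  [ffun C : {set 'I_3} => \sum_(A : {set 'I_3}) \sum_(B : {set 'I_3})
      (if symdiff A B == C then blade_sign A B * x A * y B else 0)].

Definition rev (x : mv R) : mv R := [ffun A : {set 'I_3} => (-1) ^+ 'C(#|A|, 2) * x A].

Definition scal (r : R) : mv R := [ffun A : {set 'I_3} => if A == set0 then r else 0].
Definition e (i : 'I_3) : mv R := [ffun A : {set 'I_3} => if A == [set i] then 1 else 0].
Definition smul (k : R) (x : mv R) : mv R := [ffun A : {set 'I_3} => k * x A].
Definition e1 : mv R := e ord0.
Definition e2 : mv R := e (inord 1).
Definition e3 : mv R := e (inord 2).
Definition e123 : mv R := gp (gp e1 e2) e3.

Definition even (x : mv R) : bool := [forall A : {set 'I_3}, odd #|A| ==> (x A == 0)].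

Definition tau : R := (1 + Num.sqrt 5) / 2.

Definition a1 : mv R := e2.
Definition a2 : mv R := smul (2^-1) (- smul tau e1 - e2 - smul (tau - 1) e3).
Definition a3 : mv R := e1.

Definition H3gen (x : mv R) : Prop := x = a1 \/ x = a2 \/ x = a3.

Inductive in2I : mv R -> Prop :=
| in2I_one : in2I (scal 1)
| in2I_step x a b : in2I x -> H3gen a -> H3gen b -> in2I (gp (gp x a) b).

(* P: the group generated by a2, a3, e1e2e3 under the geometric product.
   All generators have finite order (a2^2 = a3^2 = 1, e123^4 = 1), so the
   generated group coincides with the generated monoid. *)
Definition Pgen (x : mv R) : Prop := x = a2 \/ x = a3 \/ x = e123.

Inductive inP : mv R -> Prop :=
| inP_one : inP (scal 1)
| inP_step x g : inP x -> Pgen g -> inP (gp x g).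

Definition inPsi (x : mv R) : Prop := inP x /\ even x.

Definition inGA (x : mv R) : Prop := in2I x /\ ~ inPsi x.

Definition refl (Rr : mv R) (X : mv R) : mv R := - gp (gp Rr (rev X)) Rr.

(* the reflection group generated by s_R, R in Psi.  Each s_R is an
   involution, so finite compositions already form the generated group. *)
Inductive inW : (mv R -> mv R) -> Prop :=
| inW_id : inW id
| inW_step Rr w : inPsi Rr -> inW w -> inW (refl Rr \o w).

End Cl3.

From Pilot Require Import Defs.
From mathcomp Require Import all_boot all_order all_algebra.
From mathcomp Require Import ring.
Set Implicit Arguments. Unset Strict Implicit. Unset Printing Implicit Defensive.
Import Order.TTheory GRing.Theory Num.Theory.
Local Open Scope ring_scope.

(* Every element of P is a word in the roots a1, a2, a3, possibly times the
   pseudoscalar e123, which is central with e123^2 = -1; and -1 = (a1 a3)^2 is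
   itself a word of even length.  Hence for R in P and X in 2I, a word of even
   length, s_R(X) = -R~XR = +-u~Xu (u a word) is again a word of even length,
   since the roots are vectors and so fixed by reversion.  Psi is stable under
   the s_R because P and Cl^+(3) are closed under products, reversion and
   negation.  Finally R~R = ~RR = 1 for R in P, so every s_R is an involution,
   and an involution preserving both 2I and Psi preserves 2I \ Psi. *)

Local Notation rev := Defs.rev.

Definition i0 : 'I_3 := @Ordinal 3 0 isT.
Definition i1 : 'I_3 := @Ordinal 3 1 isT.
Definition i2 : 'I_3 := @Ordinal 3 2 isT.

Lemma ord3E : [/\ ord0 = i0, inord 1 = i1 & inord 2 = i2].
Proof. by split; apply: val_inj; rewrite /= ?inordK. Qed.

Lemma sum_ord3 (F : 'I_3 -> nat) : (\sum_(i < 3) F i = F i0 + F i1 + F i2)%N.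
Proof.
rewrite !big_ord_recl big_ord0 addn0 addnA.
by congr (F _ + F _ + F _)%N; apply: val_inj.
Qed.

Lemma card_set3 (A : {set 'I_3}) :
  #|A| = ((i0 \in A) + (i1 \in A) + (i2 \in A))%N.
Proof. by rewrite -sum1_card big_mkcond sum_ord3. Qed.

Definition inversions (A B : {set 'I_3}) : nat :=
  #|[set p : 'I_3 * 'I_3 | [&& p.1 \in A, p.2 \in B & (p.2 < p.1)%N]]|.

Lemma inversions_set3 (A B : {set 'I_3}) : inversions A B =
  (((i0 \in B) && (i1 \in A)) + ((i0 \in B) && (i2 \in A))
   + ((i1 \in B) && (i2 \in A)))%N.
Proof.
rewrite /inversions cardsE -sum1_card big_mkcond /=.
rewrite (eq_bigr (fun p => nat_of_bool [&& p.1 \in A, p.2 \in B & (p.2 < p.1)%N]));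
  last by case=> i j _; rewrite unfold_in; case: ifP.
rewrite -(pair_bigA _ (fun i j => nat_of_bool [&& i \in A, j \in B & (j < i)%N])) /=.
rewrite !sum_ord3 /=.
by case: (i0 \in A); case: (i1 \in A); case: (i2 \in A);
   case: (i0 \in B); case: (i1 \in B); case: (i2 \in B).
Qed.

Lemma in_symdiff (x : 'I_3) (A B : {set 'I_3}) :
  (x \in symdiff A B) = (x \in A) (+) (x \in B).
Proof. by rewrite !inE; case: (x \in A); case: (x \in B). Qed.

Ltac set3_cases :=
  rewrite ?card_set3 ?inversions_set3 ?in_symdiff ?in_set0 ?in_setT;
  repeat match goal with |- context [?i \in ?X] => case: (i \in X) end.

Lemma symdiffC (A B : {set 'I_3}) : symdiff A B = symdiff B A.
Proof. by apply/setP => x; set3_cases. Qed.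

Lemma symdiffA (A B D : {set 'I_3}) :
  symdiff A (symdiff B D) = symdiff (symdiff A B) D.
Proof. by apply/setP => x; set3_cases. Qed.

Lemma symdiff0 (A : {set 'I_3}) : symdiff A set0 = A.
Proof. by apply/setP => x; set3_cases. Qed.

Lemma symdiffv (A : {set 'I_3}) : symdiff A A = set0.
Proof. by apply/setP => x; set3_cases. Qed.

Lemma symdiffK (A B : {set 'I_3}) : symdiff A (symdiff A B) = B.
Proof. by rewrite symdiffA symdiffv symdiffC symdiff0. Qed.

Lemma symdiff_eq0 (A B : {set 'I_3}) : (symdiff A B == set0) = (A == B).
Proof. by rewrite -(inj_eq (can_inj (symdiffK A))) symdiffK symdiff0 eq_sym. Qed.

Lemma symdiff_inj (A : {set 'I_3}) : injective (symdiff A).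
Proof. exact: can_inj (symdiffK A). Qed.

Lemma inversions0l (A : {set 'I_3}) : inversions set0 A = 0%N.
Proof. by set3_cases. Qed.

Lemma inversions0r (A : {set 'I_3}) : inversions A set0 = 0%N.
Proof. by set3_cases. Qed.

Lemma odd_inversions_cocycle (A B D : {set 'I_3}) :
  odd (inversions (symdiff A B) (symdiff (symdiff A B) D) + inversions A B) =
  odd (inversions A (symdiff A D) + inversions B (symdiff (symdiff A B) D)).
Proof. by set3_cases. Qed.

Lemma odd_inversions_rev (A C : {set 'I_3}) :
  odd ('C(#|C|, 2) + inversions A (symdiff A C)) =
  odd (inversions (symdiff A C) A + 'C(#|symdiff A C|, 2) + 'C(#|A|, 2)).
Proof. by set3_cases. Qed.

Lemma odd_inversionsT (A : {set 'I_3}) :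
  odd (inversions A setT) = odd (inversions setT A).
Proof. by set3_cases. Qed.

Lemma odd_card_symdiff (A C : {set 'I_3}) : odd #|C| -> odd #|A| || odd #|symdiff A C|.
Proof. by set3_cases. Qed.

Lemma signrE (R : pzRingType) n : (-1) ^+ n = (if odd n then -1 else 1) :> R.
Proof. by rewrite -signr_odd; case: (odd n). Qed.

Lemma signr_odd_eq (R : pzRingType) m n :
  odd m = odd n -> (-1) ^+ m = (-1) ^+ n :> R.
Proof. by move=> mn; rewrite -signr_odd mn signr_odd. Qed.

Ltac eval_signs := rewrite ?signrE ?oddD /=.

Section GeometricProduct.

Variable R : rcfType.
Local Notation mv := (mv R).
Implicit Types x y z : mv.

Lemma blade_signE (A B : {set 'I_3}) : blade_sign R A B = (-1) ^+ inversions A B.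
Proof. by []. Qed.

Lemma gpE x y C :
  gp x y C = \sum_A blade_sign R A (symdiff A C) * x A * y (symdiff A C).
Proof.
rewrite ffunE; apply: eq_bigr => A _.
rewrite (bigD1 (symdiff A C)) //= symdiffK eqxx big1 ?addr0 // => B nB.
by rewrite ifN //; apply: contra nB => /eqP <-; rewrite symdiffK.
Qed.

Lemma gpA x y z : gp (gp x y) z = gp x (gp y z).
Proof.
apply/ffunP => D; rewrite [LHS]gpE [RHS]gpE.
under eq_bigr => C _ do rewrite gpE big_distrr big_distrl /=.
under [RHS]eq_bigr => A _ do rewrite gpE big_distrr /=.
rewrite exchange_big; apply: eq_bigr => A _.
rewrite (reindex_inj (@symdiff_inj A)) /=; apply: eq_bigr => B _.
rewrite symdiffK symdiffA (symdiffC B A).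
set s := blade_sign R A (symdiff A D); set t := blade_sign R B _.
have cocycle : blade_sign R (symdiff A B) (symdiff (symdiff A B) D)
    * blade_sign R A B = s * t.
  by rewrite !blade_signE -!exprD; apply/signr_odd_eq/odd_inversions_cocycle.
by rewrite !mulrA cocycle (mulrAC s).
Qed.

Lemma gp1l x : gp (scal 1) x = x.
Proof.
apply/ffunP => C; rewrite gpE (bigD1 set0) //= big1 ?addr0 => [|A nA].
  by rewrite !ffunE eqxx blade_signE inversions0l symdiffC symdiff0 !mul1r.
by rewrite !ffunE (negbTE nA) mulr0 mul0r.
Qed.

Lemma gp1r x : gp x (scal 1) = x.
Proof.
apply/ffunP => C; rewrite gpE (bigD1 C) //= big1 ?addr0 => [|A nA].
  by rewrite !ffunE symdiffv eqxx blade_signE inversions0r !mulr1 mul1r.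
by rewrite !ffunE symdiff_eq0 (negbTE nA) mulr0.
Qed.

Lemma gpNl x y : gp (- x) y = - gp x y.
Proof.
apply/ffunP => C; rewrite gpE [RHS]ffunE gpE -sumrN.
by apply: eq_bigr => A _; rewrite ffunE /=; ring.
Qed.

Lemma gpNr x y : gp x (- y) = - gp x y.
Proof.
apply/ffunP => C; rewrite gpE [RHS]ffunE gpE -sumrN.
by apply: eq_bigr => A _; rewrite ffunE /=; ring.
Qed.

Lemma gpDl x y z : gp (x + y) z = gp x z + gp y z.
Proof.
apply/ffunP => C; rewrite gpE [RHS]ffunE !gpE -big_split.
by apply: eq_bigr => A _; rewrite ffunE /=; ring.
Qed.

Lemma gpDr x y z : gp x (y + z) = gp x y + gp x z.
Proof.
apply/ffunP => C; rewrite gpE [RHS]ffunE !gpE -big_split.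
by apply: eq_bigr => A _; rewrite ffunE /=; ring.
Qed.

Lemma gpZl k x y : gp (smul k x) y = smul k (gp x y).
Proof.
apply/ffunP => C; rewrite gpE [RHS]ffunE gpE big_distrr.
by apply: eq_bigr => A _; rewrite ffunE /=; ring.
Qed.

Lemma gpZr k x y : gp x (smul k y) = smul k (gp x y).
Proof.
apply/ffunP => C; rewrite gpE [RHS]ffunE gpE big_distrr.
by apply: eq_bigr => A _; rewrite ffunE /=; ring.
Qed.

Lemma rev_gp x y : rev (gp x y) = gp (rev y) (rev x).
Proof.
apply/ffunP => C; rewrite [LHS]ffunE !gpE big_distrr.
rewrite [RHS](reindex_inj (@symdiff_inj C)) /=; apply: eq_bigr => A _.
rewrite !ffunE (symdiffC (symdiff C A) C) symdiffK (symdiffC C A).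
have sign_rev : (-1) ^+ 'C(#|C|, 2) * blade_sign R A (symdiff A C) =
    blade_sign R (symdiff A C) A * (-1) ^+ 'C(#|symdiff A C|, 2)
      * (-1) ^+ 'C(#|A|, 2).
  by rewrite !blade_signE -!exprD; apply/signr_odd_eq/odd_inversions_rev.
by rewrite !mulrA sign_rev; ring.
Qed.

Lemma revN x : rev (- x) = - rev x.
Proof. by apply/ffunP => A; rewrite !ffunE mulrN. Qed.

Lemma revK : involutive (@rev R).
Proof.
move=> x; apply/ffunP => A.
by rewrite !ffunE mulrA -exprD addnn -signr_odd odd_double mul1r.
Qed.

Lemma rev1 : rev (scal 1) = scal 1 :> mv.
Proof.
apply/ffunP => A; rewrite !ffunE.
by case: eqP => [->|_]; rewrite ?cards0 ?mulr0 ?mul1r.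
Qed.

Lemma even_gp x y : even x -> even y -> even (gp x y).
Proof.
move=> /forallP ex /forallP ey; apply/forallP => C; apply/implyP => oddC.
rewrite gpE big1 // => A _.
case/orP: (odd_card_symdiff A oddC) => [/(implyP (ex A))|/(implyP (ey _))] /eqP->.
  by rewrite mulr0 mul0r.
by rewrite mulr0.
Qed.

Lemma even_rev x : even x -> even (rev x).
Proof.
move=> /forallP ex; apply/forallP => C; apply/implyP => /(implyP (ex C)) /eqP xC.
by rewrite ffunE xC mulr0.
Qed.

Lemma evenN x : even x -> even (- x).
Proof.
move=> /forallP ex; apply/forallP => C; apply/implyP => /(implyP (ex C)) /eqP xC.
by rewrite ffunE xC oppr0.
Qed.

End GeometricProduct.

Section Blades.

Variable R : rcfType.
Local Notation mv := (mv R).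

Definition blade (B : {set 'I_3}) : mv := [ffun C => if C == B then 1 else 0].

Lemma e_blade i : e R i = blade [set i].
Proof. by []. Qed.

Lemma gp_blade A B :
  gp (blade A) (blade B) = smul (blade_sign R A B) (blade (symdiff A B)).
Proof.
apply/ffunP => C; rewrite gpE (bigD1 A) //= big1 ?addr0 => [|D nD]; last first.
  by rewrite !ffunE (negbTE nD) mulr0 mul0r.
rewrite !ffunE eqxx mulr1.
have [->|nC] := eqVneq C (symdiff A B); first by rewrite symdiffK !eqxx.
by rewrite ifN ?mulr0 //; apply: contra nC => /eqP <-; rewrite symdiffK.
Qed.

Lemma e123E : e123 R = blade setT.
Proof.
have [e1E e2E e3E] := ord3E; rewrite /e123 /e1 /e2 /e3 e1E e2E e3E.
rewrite !e_blade !gp_blade gpZl gp_blade.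
have -> : symdiff (symdiff [set i0] [set i1]) [set i2] = setT.
  by apply/setP => i; rewrite !in_symdiff !in_set1 in_setT; case: i => [[|[|[|]]]].
apply/ffunP => C; rewrite !ffunE !blade_signE !inversions_set3 !in_symdiff !in_set1 /=.
by eval_signs; ring.
Qed.

Lemma e_sqr i : gp (e R i) (e R i) = scal 1.
Proof.
rewrite e_blade gp_blade symdiffv; apply/ffunP => C; rewrite !ffunE.
rewrite blade_signE inversions_set3 !in_set1.
by case: i => [[|[|[|]]] ?] //=; rewrite mul1r.
Qed.

Lemma e_anticomm i j : i != j -> gp (e R j) (e R i) = - gp (e R i) (e R j).
Proof.
rewrite !e_blade !gp_blade (symdiffC [set j]) => ij; apply/ffunP => C.
rewrite !ffunE !blade_signE !inversions_set3 !in_set1.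
by move: ij; case: i => [[|[|[|]]] ?]; case: j => [[|[|[|]]] ?] //= _;
  eval_signs; ring.
Qed.

Lemma e123_central x : gp x (e123 R) = gp (e123 R) x.
Proof.
rewrite e123E; apply/ffunP => C; rewrite !gpE.
rewrite (bigD1 (symdiff C setT)) //= big1 ?addr0 => [|A nA]; last first.
  rewrite !ffunE ifN ?mulr0 //; apply: contra nA => /eqP <-.
  by rewrite (symdiffC A C) symdiffK.
rewrite [RHS](bigD1 setT) //= [X in _ = _ + X]big1 ?addr0 => [|A nA]; last first.
  by rewrite !ffunE (negbTE nA) mulr0 mul0r.
rewrite !ffunE eqxx (symdiffC (symdiff C setT)) symdiffK (symdiffC setT C).
rewrite !eqxx !mulr1.
by congr (_ * _); rewrite !blade_signE; apply/signr_odd_eq/odd_inversionsT.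
Qed.

Lemma e123_sqr : gp (e123 R) (e123 R) = - scal 1.
Proof.
rewrite e123E gp_blade symdiffv; apply/ffunP => C.
rewrite !ffunE blade_signE inversions_set3 !in_setT /=.
by eval_signs; rewrite mulN1r.
Qed.

Lemma rev_e123 : rev (e123 R) = - e123 R.
Proof.
rewrite e123E; apply/ffunP => C; rewrite !ffunE.
have [->|_] := eqVneq C setT; last by rewrite mulr0 oppr0.
by rewrite cardsT card_ord; eval_signs; rewrite mulr1.
Qed.

End Blades.

Section H3Roots.

Variable R : rcfType.
Local Notation mv := (mv R).

Lemma revD (x y : mv) : rev (x + y) = rev x + rev y.
Proof. by apply/ffunP => A; rewrite !ffunE mulrDr. Qed.

Lemma revZ k (x : mv) : rev (smul k x) = smul k (rev x).
Proof. by apply/ffunP => A; rewrite !ffunE mulrCA. Qed.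

Lemma rev_e i : rev (e R i) = e R i.
Proof.
apply/ffunP => A; rewrite !ffunE.
by case: eqP => [->|_]; rewrite ?cards1 ?mulr0 ?mul1r.
Qed.

Lemma tau_sqr : tau R ^+ 2 = tau R + 1.
Proof.
have sqrt5 : Num.sqrt (5 : R) ^+ 2 = 5 by rewrite sqr_sqrtr // ler0n.
by rewrite /tau; field: sqrt5.
Qed.

Lemma a2_sqr : gp (a2 R) (a2 R) = scal 1.
Proof.
have [e1E e2E e3E] := ord3E; rewrite /a2 /e1 /e2 /e3 e1E e2E e3E.
rewrite !(gpZl, gpZr, gpDl, gpDr, gpNl, gpNr) !e_sqr.
rewrite (@e_anticomm R i0 i1) // (@e_anticomm R i0 i2) // (@e_anticomm R i1 i2) //.
apply/ffunP => C; rewrite !ffunE /=.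
by field: tau_sqr.
Qed.

Lemma a1a3_sqr : gp (gp (gp (a1 R) (a3 R)) (a1 R)) (a3 R) = - scal 1.
Proof.
have [e1E e2E _] := ord3E; rewrite /a1 /a3 /e1 /e2 e1E e2E gpA.
by rewrite {2}(@e_anticomm R i0 i1) // gpNr gpA -(gpA (e R i0)) !e_sqr gp1l e_sqr.
Qed.

Lemma rev_a2 : rev (a2 R) = a2 R.
Proof. by rewrite /a2 !(revZ, revD, revN) !rev_e. Qed.

End H3Roots.

Section Reflections.

Variable R : rcfType.
Local Notation mv := (mv R).
Implicit Types g r x y X : mv.

Lemma refl_involutive r :
  gp r (rev r) = scal 1 -> gp (rev r) r = scal 1 -> involutive (refl r).
Proof.
move=> r_revr revr_r X; rewrite /refl revN !rev_gp revK gpNr gpNl opprK.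
by rewrite !gpA revr_r gp1r -gpA r_revr gp1l.
Qed.

Lemma even_refl r X : even r -> even X -> even (refl r X).
Proof. by move=> er eX; apply/evenN/even_gp/er/even_gp/even_rev. Qed.

Lemma inP_gp x y : inP x -> inP y -> inP (gp x y).
Proof.
move=> Px; elim=> [|y' g _ Pxy' Pg]; first by rewrite gp1r.
by rewrite -gpA; apply: inP_step.
Qed.

Lemma inP_gen g : Pgen g -> inP g.
Proof. by move=> Pg; rewrite -(gp1l g); apply: inP_step (inP_one R) Pg. Qed.

Lemma inPN x : inP x -> inP (- x).
Proof.
have Pe123 : inP (e123 R) by apply: inP_gen; right; right.
by move=> Px; rewrite -(gp1r x) -gpNr -e123_sqr; apply/inP_gp/inP_gp.
Qed.

Lemma inP_rev x : inP x -> inP (rev x).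
Proof.
elim=> [|y g _ Py Pg]; first by rewrite rev1; apply: inP_one.
rewrite rev_gp; apply: inP_gp Py.
case: Pg => [->|[->|->]]; first by rewrite rev_a2; apply: inP_gen; left.
  by rewrite rev_e; apply: inP_gen; right; left.
by rewrite rev_e123; apply/inPN/inP_gen; right; right.
Qed.

Lemma inP_refl r X : inP r -> inP X -> inP (refl r X).
Proof. by move=> Pr PX; apply/inPN/inP_gp/Pr/inP_gp/inP_rev. Qed.

Lemma inPsi_refl r X : inPsi r -> inPsi X -> inPsi (refl r X).
Proof. by case=> Pr er [PX eX]; split; [apply: inP_refl | apply: even_refl]. Qed.

Lemma inP_unit r : inP r -> gp r (rev r) = scal 1 /\ gp (rev r) r = scal 1.
Proof.
elim=> [|y g _ [y_revy revy_y] Pg]; first by rewrite rev1 gp1l.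
have [g_revg revg_g] : gp g (rev g) = scal 1 /\ gp (rev g) g = scal 1.
  case: Pg => [->|[->|->]]; first by rewrite rev_a2 a2_sqr.
    by rewrite rev_e e_sqr.
  by rewrite rev_e123 gpNr gpNl e123_sqr opprK.
rewrite rev_gp !gpA -(gpA g) -(gpA (rev y)) g_revg revy_y !gp1l.
by rewrite y_revy revg_g.
Qed.

Lemma inP_refl_involutive r : inP r -> involutive (refl r).
Proof. by case/inP_unit; apply: refl_involutive. Qed.

End Reflections.

Section H3Words.

Variable R : rcfType.
Local Notation mv := (mv R).
Implicit Types a r u x y X : mv.

Inductive h3_word : bool -> mv -> Prop :=
| h3_word1 : h3_word false (scal 1)
| h3_wordM b x a : h3_word b x -> H3gen a -> h3_word (~~ b) (gp x a).

Lemma h3_word_gp b c x y :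
  h3_word b x -> h3_word c y -> h3_word (b (+) c) (gp x y).
Proof.
move=> wx; elim=> [|c' y' a _ wxy' Ha]; first by rewrite gp1r addbF.
by rewrite -gpA addbN; apply: h3_wordM.
Qed.

Lemma h3_word_gen a : H3gen a -> h3_word true a.
Proof. by move=> Ha; rewrite -(gp1l a); apply: h3_wordM h3_word1 Ha. Qed.

Lemma rev_H3gen a : H3gen a -> rev a = a.
Proof. by case=> [->|[->|->]]; rewrite ?rev_a2 ?rev_e. Qed.

Lemma h3_word_rev b x : h3_word b x -> h3_word b (rev x).
Proof.
elim=> [|c y a _ wy Ha]; first by rewrite rev1; apply: h3_word1.
rewrite rev_gp (rev_H3gen Ha) -[~~ c]addTb.
exact: h3_word_gp (h3_word_gen Ha) wy.
Qed.

Lemma h3_wordN b x : h3_word b x -> h3_word b (- x).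
Proof.
have a1R : H3gen (a1 R) by left.
have a3R : H3gen (a3 R) by right; right.
have w_m1 : h3_word false (- scal 1).
  rewrite -a1a3_sqr.
  exact: h3_wordM (h3_wordM (h3_wordM (h3_word_gen a1R) a3R) a1R) a3R.
by move=> wx; rewrite -(gp1r x) -gpNr -[b]addbF; apply: h3_word_gp wx w_m1.
Qed.

Lemma in2I_h3_word x : in2I x <-> h3_word false x.
Proof.
split.
  elim=> [|y a a' _ wy Ha Ha']; first exact: h3_word1.
  exact: h3_wordM (h3_wordM wy Ha) Ha'.
suff: forall b, h3_word b x ->
    if b then exists y a, [/\ in2I y, H3gen a & x = gp y a] else in2I x by apply.
move=> b; elim=> [|[] y a _ IHy Ha]; first exact: in2I_one.
  by case: IHy => y' [a' [Iy' Ha' ->]]; apply: in2I_step.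
by exists y, a.
Qed.

Lemma inP_h3_word r :
  inP r -> exists b u, h3_word b u /\ (r = u \/ r = gp u (e123 R)).
Proof.
elim=> [|y g _ [b [u [wu y_u]]] Pg].
  by exists false, (scal 1); split; [apply: h3_word1 | left].
have mul_root a : H3gen a ->
    exists b' u', h3_word b' u' /\ (gp y a = u' \/ gp y a = gp u' (e123 R)).
  move=> Ha; exists (~~ b), (gp u a); split; first exact: h3_wordM wu Ha.
  by case: y_u => ->; [left | right; rewrite gpA -e123_central -gpA].
case: Pg => [->|[->|->]]; first by apply: mul_root; right; left.
  by apply: mul_root; right; right.
case: y_u => ->; first by exists b, u; split; last right.
by exists b, (- u); split; [apply: h3_wordN | left; rewrite gpA e123_sqr gpNr gp1r].
Qed.

Lemma in2I_refl r X : inP r -> in2I X -> in2I (refl r X).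
Proof.
move=> /inP_h3_word [b [u [wu r_u]]] /in2I_h3_word /h3_word_rev wX.
have uXu : h3_word false (gp (gp u (rev X)) u).
  by have := h3_word_gp (h3_word_gp wu wX) wu; rewrite addbF addbb.
apply/in2I_h3_word/h3_wordN; case: r_u => ->; first exact: uXu.
have -> : gp (gp (gp u (e123 R)) (rev X)) (gp u (e123 R)) = - gp (gp u (rev X)) u.
  rewrite [gp (gp u _) (rev X)]gpA -[gp (e123 R) (rev X)]e123_central.
  rewrite -[gp u (gp (rev X) _)]gpA.
  by rewrite gpA (e123_central u) -(gpA (e123 R)) e123_sqr gpNl gp1l gpNr.
exact: h3_wordN.
Qed.

End H3Words.

Unset Implicit Arguments.

Theorem mainTheorem6 (R : rcfType) :
  forall w : mv R -> mv R, inW w ->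
    (forall X, inPsi X -> inPsi (w X)) /\ (forall X, inGA X -> inGA (w X)).
Proof.
move=> w; elim=> [|r w' Psi_r _ [IHPsi IHGA]]; first by [].
split=> X /= XX; first exact/inPsi_refl/IHPsi.
have [I_wX Psi_wXN] := IHGA X XX; split; first exact: in2I_refl (proj1 Psi_r) I_wX.
move=> Psi_refl; apply: Psi_wXN.
by rewrite -(inP_refl_involutive (proj1 Psi_r) (w' X)); apply: inPsi_refl.
Qed.
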